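(* Let $a\geq 3$ and $m\geq 2a^2-a+2$ be integers, and suppose $[C(m,a)]$ is colored with red and blue so that there is no monochromatic solution of $L(m,a)$ in $[C(m,a)]$, with both $a-2$ and $a-1$ red. Then $2$ is red.
   Context: For integers $m\geq 3$, $a\geq 1$, $L(m,a)$ denotes the equation $x_1+x_2+\cdots+x_{m-1}=a x_m$. For a positive integer $n$, $[n]=\{1,\dots,n\}$. A solution of $L(m,a)$ in $[n]$ is an $m$-tuple $(x_1,\dots,x_m)\in[n]^m$ (entries not necessarily distinct) satisfying the equation; given a 2-coloring of $[n]$, it is monochromatic if all $x_i$ have the same color. $C(m,a)$ denotes $\left\lceil \frac{m-1}{a}\left\lceil \frac{m-1}{a}\right\rceil\right\rceil$. *)

From mathcomp Require Import all_boot.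
Unset Printing Implicit Defensive.

Definition ceil_div (p q : nat) : nat := (p + q - 1) %/ q.

Definition Cma (m a : nat) : nat := ceil_div ((m - 1) * ceil_div (m - 1) a) a.

(* A 2-coloring of [n]: col : nat -> bool (true = red, false = blue);
   only its values on [n] matter. *)

(* A solution of L(m,a) in [n]: (x_1..x_{m-1}) given by y : 'I_(m-1) -> nat,
   and x_m = z, with all entries in [1,n]. *)
Definition is_solution (m a n : nat) (y : 'I_(m - 1) -> nat) (z : nat) : Prop :=
  (forall i, 1 <= y i <= n) /\ 1 <= z <= n /\
  \sum_(i < m - 1) y i = a * z.

Definition monochromatic (m : nat) (col : nat -> bool)
    (y : 'I_(m - 1) -> nat) (z : nat) : Prop :=
  forall i, col (y i) = col z.

Definition no_mono_solution (m a n : nat) (col : nat -> bool) : Prop :=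
  forall (y : 'I_(m - 1) -> nat) (z : nat),
    @is_solution m a n y z -> ~ @monochromatic m col y z.

From mathcomp Require Import all_boot zify.

Set Implicit Arguments.
Unset Strict Implicit.

(* Write k = m - 1 (the number of summands on the left of
   L(m,a)) and n = C(m,a); the hypothesis on m gives a^2 <= k <= n.
   1. If u and u+1 share a colour, then every w with k u <= a w <= k (u+1)
      gets the other colour: otherwise t copies of u+1 and k-t copies of u
      (t = a w - k u) together with x_m = w form a monochromatic solution.
      With u = a-2 this makes every w in [k(a-2)/a, k(a-1)/a] blue.
   2. Let U = floor(k(a-1)/a), W = a U - 2(k-(a-2)), and divide
      W = (a-2) q + s with s < a-2.  Arithmetic shows q + [s > 0] <= U and
      k(a-2) <= a q, so q, q+1 (when s > 0) and U are all blue.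
   3. If 2 were blue (and a >= 4; for a = 3 the claim is a hypothesis),
      the k numbers consisting of a-2 entries q or q+1 (s of them q+1) and
      k-(a-2) twos would sum to a U: a blue solution, a contradiction. *)

Lemma sum_threshold n t A B : t <= n ->
  \sum_(i < n) (if i < t then A else B) = t * A + (n - t) * B.
Proof.
move=> tn.
rewrite -(big_mkord xpredT (fun i => if i < t then A else B)).
rewrite (@big_cat_nat _ _ _ t 0 n _ _ (leq0n t) tn) /=.
rewrite (@eq_big_nat _ _ _ 0 t _ (fun _ => A)); last by move=> i /andP[_ ->].
rewrite (@eq_big_nat _ _ _ t n _ (fun _ => B)); last first.
  by move=> i /andP[ti _]; rewrite ltnNge ti.
by rewrite !sum_nat_const_nat subn0.
Qed.

Lemma le_Cma m a : 0 < a -> a * a <= m - 1 -> m - 1 <= Cma m a.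
Proof.
move=> a_gt0 ha; rewrite /Cma /ceil_div.
set k := m - 1.
have a_le : a <= (k + a - 1) %/ a by rewrite leq_divRL //; lia.
have : k * a <= k * ((k + a - 1) %/ a) + a - 1.
  by have := leq_mul (leqnn k) a_le; lia.
by move/(leq_div2r a); rewrite mulnK.
Qed.

Lemma no_mono_between m a n col u w :
  no_mono_solution m a n col -> 0 < u -> u < n -> col u = col u.+1 ->
  (m - 1) * u <= a * w <= (m - 1) * u.+1 -> 0 < w <= n -> col w != col u.
Proof.
move=> hno u_gt0 u_lt_n same /andP[lo hi] w_range; apply/negP => /eqP same_w.
set t := a * w - (m - 1) * u.
have t_le : t <= m - 1 by rewrite /t; nia.
apply: (hno (fun i : 'I_(m - 1) => if i < t then u.+1 else u) w).
- split; [|split] => //.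
  + by move=> i; case: ifP => _; lia.
  + by rewrite sum_threshold // /t; nia.
- by move=> i /=; rewrite same_w; case: ifP.
Qed.

Lemma flip_interval m a col w :
  4 <= a -> a * a <= m - 1 -> no_mono_solution m a (Cma m a) col ->
  col (a - 2) = col (a - 1) -> (m - 1) * (a - 2) <= a * w <= (m - 1) * (a - 1) ->
  col w != col (a - 2).
Proof.
move=> a_ge4 k_large hno same /andP[lo hi].
have k_le_n : m - 1 <= Cma m a by apply: le_Cma; lia.
have a_pred : (a - 2).+1 = a - 1 by lia.
apply: (no_mono_between hno); rewrite ?a_pred ?lo ?hi //; first by lia.
- by apply: leq_trans k_le_n; nia.
- by apply/andP; split; [|apply: leq_trans k_le_n]; nia.
Qed.

Definition cap (a k : nat) : nat := k * (a - 1) %/ a.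
Definition excess (a k : nat) : nat := a * cap a k - 2 * (k - (a - 2)).

(* The i-th summand of the final construction: a-2 entries q, the first s of
   them raised to q+1, followed by twos. *)
Definition entry (a k i : nat) : nat :=
  (i < excess a k %% (a - 2)) + (if i < a - 2 then excess a k %/ (a - 2) else 2).

Section ExcessDivision.
Variables a k : nat.
Hypotheses (a_ge4 : 4 <= a) (k_large : a * a <= k).

Local Notation U := (cap a k).
Local Notation q := (excess a k %/ (a - 2)).
Local Notation s := (excess a k %% (a - 2)).

Lemma cap_bounds : k * (a - 1) <= a * U + (a - 1) /\ a * U <= k * (a - 1).
Proof.
have a_gt0 : 0 < a by lia.
have := divn_eq (k * (a - 1)) a; have := ltn_pmod (k * (a - 1)) a_gt0.
rewrite -/(cap a k); lia.
Qed.

Lemma cap_le : 2 * (k - (a - 2)) <= a * U /\ U <= k - (a - 2).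
Proof. have [lo hi] := cap_bounds; split; nia. Qed.

Lemma excess_decomp : (a - 2) * q + s + 2 * (k - (a - 2)) = a * U.
Proof.
have [twos _] := cap_le; have := divn_eq (excess a k) (a - 2).
rewrite /excess; lia.
Qed.

Lemma rem_lt : s < a - 2.
Proof. by apply: ltn_pmod; lia. Qed.

(* (a-2) q >= k(a-3), hence a q >= k(a-2) because a(a-3) >= (a-2)^2. *)
Lemma quot_low : k * (a - 2) <= a * q.
Proof.
have [lo _] := cap_bounds; move: lo excess_decomp rem_lt.
move: (cap a k) (excess a k %/ (a - 2)) (excess a k %% (a - 2)) => u x r.
have [b a_eq] : exists b, a = b + 4 by exists (a - 4); lia.
rewrite a_eq; have [-> ->] : b + 4 - 1 = b + 3 /\ b + 4 - 2 = b + 2 by lia.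
move=> lo hdec hr; have twos : k - (b + 2) + (b + 2) = k by nia.
have base : k * (b + 1) <= (b + 2) * x by nia.
have : (b + 2) * (k * (b + 2)) <= (b + 2) * ((b + 4) * x) by nia.
rewrite leq_pmul2l //; lia.
Qed.

Lemma quot_le_cap : q + (0 < s) <= U.
Proof.
have [twos capK] := cap_le; have := excess_decomp.
have a2_gt0 : 0 < a - 2 by lia.
move=> hdec; have bound : (a - 2) * q + s <= (a - 2) * U by nia.
case: (posnP s) => [s0|s_gt0] /=.
- rewrite s0 addn0 in bound; rewrite addn0 -(leq_pmul2l a2_gt0); lia.
- rewrite addn1 -(ltn_pmul2l a2_gt0); lia.
Qed.

Lemma quot_pos : 0 < q.
Proof. by rewrite lt0n; apply/eqP => q0; move: quot_low; rewrite q0; nia. Qed.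

Lemma entry_cases i : entry a k i = 2 \/ q <= entry a k i <= U.
Proof.
have := quot_le_cap; have := rem_lt; rewrite /entry.
case: ifP => i_small; last by left; case: (ltnP i s) => // i_s; lia.
by right; case: (ltnP i s) => i_s /=; lia.
Qed.

Lemma sum_entry : \sum_(i < k) entry a k i = a * U.
Proof.
have := excess_decomp; have := rem_lt; have [twos _] := cap_le; rewrite /entry.
move=> hs hdec; rewrite big_split /= (sum_threshold 1 0 (_ : s <= k)); last by nia.
rewrite sum_threshold; nia.
Qed.

End ExcessDivision.

Theorem lemma6 (m a : nat) (col : nat -> bool) :
  3 <= a ->
  2 * a ^ 2 - a + 2 <= m ->
  no_mono_solution m a (Cma m a) col ->
  col (a - 2) = true ->
  col (a - 1) = true ->
  col 2 = true.
Proof.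
move=> a_ge3 m_large hno red_a2 red_a1.
have [a3 | a_ge4] : a = 3 \/ 4 <= a by lia.
  by rewrite a3 in red_a1.
case col2: (col 2) => //; exfalso.
set k := m - 1.
have k_large : a * a <= k by rewrite /k; move: m_large; rewrite expnS expn1; nia.
have k_le_n : k <= Cma m a by apply: le_Cma; lia.
have two_le_k : 2 <= k by nia.
have [_ U_high] := cap_bounds a_ge4 k_large; have [_ U_le] := cap_le a_ge4 k_large.
have q_low := quot_low a_ge4 k_large; have q_pos := quot_pos a_ge4 k_large.
have q_le_U := leq_trans (leq_addr _ _) (quot_le_cap a_ge4 k_large).
set U := cap a k in U_high U_le q_le_U *.
set q := excess a k %/ (a - 2) in q_low q_pos q_le_U *.
have blue : forall w, q <= w <= U -> col w = false.
  move=> w /andP[qw wU].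
  suff : col w != col (a - 2) by rewrite red_a2; case: (col w).
  apply: flip_interval a_ge4 k_large hno _ _; first by rewrite red_a2 red_a1.
  by apply/andP; split; [apply: leq_trans q_low _ | apply: leq_trans U_high];
    rewrite leq_mul2l ?qw ?wU orbT.
apply: (hno (fun i : 'I_(m - 1) => entry a k i) U).
- split; [|split]; last exact: sum_entry.
  + move=> i; case: (entry_cases a_ge4 k_large i) => [->|]; rewrite -/q -/U;
    by clearbody q U; lia.
  + by clearbody q U; lia.
- move=> i /=; rewrite (blue U) ?q_le_U ?leqnn //.
  by case: (entry_cases a_ge4 k_large i) => [->|/blue].
Qed.
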